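(* Let $k$ be a field of characteristic not $2$ or $3$, let $\mathcal{A}\in k^{n+1}\otimes\operatorname{Sym}_2k^{m+1}$ be a tensor with slices $A_0,\dots,A_n$ such that $\det\mathcal{A}(\mathbf{x},\cdot,\cdot)$ is reduced and irreducible, and let $X=Z(\det\mathcal{A}(\mathbf{x},\cdot,\cdot))\subseteq\mathbb{P}^n$ be the associated symmetroid hypersurface. Then for every smooth point $x$ of $X$ we have $\theta_X(x)=\psi(\varphi(x))$. For $x\in\mathbb{P}^n(\bar k)$, the quadric $Z(\widehat\psi(x))\subseteq\mathbb{P}^m$ is singular if and only if $x\in X(\bar k)$; furthermore, for any $x\in X(\bar k)$ the quadric $Z(\widehat\psi(x))$ is singular at the point $\varphi(x)$ (whenever $\varphi(x)$ is defined). For any $z=[H]\in\widehat{\mathbb{P}}^n(\bar k)$, the fibre $\psi^{-1}(z)$ is the base locus of the linear space of quadrics $\widehat\psi(H)$, i.e. of $\widehat\psi|_H:H\to\mathbb{P}H^0(\mathbb{P}^m,\mathcal{O}_{\mathbb{P}^m}(2))$.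
   Context: $\mathcal{A}$ is viewed as an $(n+1)$-tuple of symmetric $(m+1)\times(m+1)$ matrices $A_0,\dots,A_n$, and $\mathcal{A}(\mathbf{x},\cdot,\cdot)=\sum x_iA_i$. The maps are: $\widehat\psi:\mathbb{P}^n\to\mathbb{P}H^0(\mathbb{P}^m,\mathcal{O}_{\mathbb{P}^m}(2))$, $x\mapsto$ the quadratic form $\mathbf{y}^T\mathcal{A}(x,\cdot,\cdot)\mathbf{y}$; $\psi:\mathbb{P}^m\dashrightarrow\widehat{\mathbb{P}}^n$, $y\mapsto(y^TA_0y:\dots:y^TA_ny)$, where points of $\widehat{\mathbb{P}}^n$ are identified with hyperplanes of $\mathbb{P}^n$; the kernel map $\varphi:X\dashrightarrow\mathbb{P}^m$, $x\mapsto\mathbb{P}(\ker\mathcal{A}(x,\cdot,\cdot))$, defined where the corank is $1$; and the Gauss map $\theta_X:X\dashrightarrow\widehat{\mathbb{P}}^n$, $x\mapsto T_xX$, defined on smooth points. *)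

From HB Require Import structures.
From mathcomp Require Import all_boot all_order all_algebra.
From mathcomp Require Import mpoly.
Set Implicit Arguments. Unset Strict Implicit. Unset Printing Implicit Defensive.
Import GRing.Theory.
Local Open Scope ring_scope.

Definition pencil (R : comNzRingType) (n m : nat) (A : 'I_n.+1 -> 'M[R]_m.+1)
  : 'M[{mpoly R[n.+1]}]_m.+1 :=
  \matrix_(a, b) \sum_(i < n.+1) 'X_i * (A i a b)%:MP.

Definition detA (R : comNzRingType) (n m : nat) (A : 'I_n.+1 -> 'M[R]_m.+1)
  : {mpoly R[n.+1]} := \det (pencil A).

Definition mirreducible (R : fieldType) (N : nat) (p : {mpoly R[N]}) : Prop :=
  p != 0 /\ p \isn't a GRing.unit /\
  forall q r : {mpoly R[N]}, p = q * r -> q \is a GRing.unit \/ r \is a GRing.unit.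

Definition mreduced (R : fieldType) (N : nat) (p : {mpoly R[N]}) : Prop :=
  p != 0 /\
  forall q r : {mpoly R[N]}, p = q * q * r -> q \is a GRing.unit.

Definition ev (R : comNzRingType) (N : nat) (p : {mpoly R[N]}) (x : 'rV[R]_N) : R :=
  p.@[fun i => x 0 i].

Definition pencil_at (R : comNzRingType) (n m : nat) (A : 'I_n.+1 -> 'M[R]_m.+1)
  (x : 'rV[R]_n.+1) : 'M[R]_m.+1 := \sum_(i < n.+1) x 0 i *: A i.

Definition psi (R : comNzRingType) (n m : nat) (A : 'I_n.+1 -> 'M[R]_m.+1)
  (y : 'rV[R]_m.+1) (i : 'I_n.+1) : R := (y *m A i *m y^T) 0 0.

Definition qform (R : comNzRingType) (m : nat) (M : 'M[R]_m.+1) : {mpoly R[m.+1]} :=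
  \sum_(a < m.+1) \sum_(b < m.+1) M a b *: ('X_a * 'X_b).

(* Z(F) is singular at the projective point [y] (Jacobian criterion) *)
Definition singular_at (R : comNzRingType) (N : nat) (F : {mpoly R[N.+1]})
  (y : 'rV[R]_N.+1) : Prop :=
  y != 0 /\ ev F y = 0 /\ forall j : 'I_N.+1, ev (mderiv j F) y = 0.

Definition hyp_singular (R : comNzRingType) (N : nat) (F : {mpoly R[N.+1]}) : Prop :=
  exists y : 'rV[R]_N.+1, singular_at F y.

Definition smooth_pt (R : comNzRingType) (N : nat) (F : {mpoly R[N.+1]})
  (x : 'rV[R]_N.+1) : Prop :=
  x != 0 /\ ev F x = 0 /\ exists j : 'I_N.+1, ev (mderiv j F) x != 0.

Definition mapA (k K : fieldType) (iota : {rmorphism k -> K}) (n m : nat)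
  (A : 'I_n.+1 -> 'M[k]_m.+1) : 'I_n.+1 -> 'M[K]_m.+1 :=
  fun i => map_mx iota (A i).

From HB Require Import structures.
From mathcomp Require Import all_boot all_order all_algebra.
From mathcomp Require Import mpoly.
From mathcomp Require Import ring.
Import GRing.Theory.
Local Open Scope ring_scope.
Set Implicit Arguments. Unset Strict Implicit.

(* Jacobi's formula gives d det A(x) / dx_i = tr (A_i adj A(x)).  At a smooth
   point of X we have det A(x) = 0 but adj A(x) <> 0, so A(x) has corank one;
   a symmetric matrix of corank one with kernel spanned by y has adjugate
   c y^T y, hence the gradient of det A at x is c (y^T A_i y)_i = c psi(phi(x)).
   The gradient of the quadric y^T A(x) y is 2 A(x) y, so outside characteristic
   2 the quadric is singular exactly at the kernel of A(x).  Finally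
   y^T A(x) y = sum_i x_i psi_i(y) pairs x with psi(y), so it vanishes for all x
   in the hyperplane H exactly when psi(y) is proportional to H. *)

Section Derivation.
Variables (R : comNzRingType) (D : {additive R -> R}).
Hypothesis D_mul : forall a b, D (a * b) = D a * b + a * D b.

Lemma derivation1 : D 1 = 0.
Proof.
have := D_mul 1 1; rewrite mulr1 mulr1 mul1r => D11.
by apply: (addrI (D 1)); rewrite addr0 -D11.
Qed.

Lemma derivation_signM (e : nat) (p : R) : D ((-1) ^+ e * p) = (-1) ^+ e * D p.
Proof.
have Dsign : D ((-1) ^+ e) = 0.
  by rewrite -signr_odd; case: odd; rewrite ?expr0 ?expr1 ?raddfN derivation1 ?oppr0.
by rewrite D_mul Dsign mul0r add0r.
Qed.

Lemma derivation_prod (I : eqType) (r : seq I) (F : I -> R) : uniq r ->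
  D (\prod_(i <- r) F i) =
  \sum_(a <- r) \prod_(i <- r) (if i == a then D (F i) else F i).
Proof.
elim: r => [|x r IHr] /=; first by rewrite !big_nil derivation1.
case/andP=> xr ur.
rewrite big_cons D_mul IHr // big_cons big_cons eqxx; congr (_ + _).
  congr (_ * _); rewrite !big_seq; apply: eq_bigr => i ir.
  by case: eqP ir xr => // -> ->.
rewrite big_distrr /= !big_seq; apply: eq_bigr => a ar.
rewrite big_cons; case: eqP ar xr => [-> -> //|_ _ _].
by rewrite big_seq.
Qed.

Lemma derivation_det n (P : 'M[R]_n) :
  D (\det P) = \sum_a \sum_c D (P a c) * cofactor P a c.
Proof.
rewrite /determinant raddf_sum.
under eq_bigr do rewrite derivation_signM derivation_prod ?index_enum_uniq // big_distrr /=.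
rewrite exchange_big /=; apply: eq_bigr => a _.
pose Pa := \matrix_(i, j) (if i == a then D (P i j) else P i j).
have -> : \sum_c D (P a c) * cofactor P a c = \det Pa.
  rewrite (expand_det_row Pa a); apply: eq_bigr => c _.
  rewrite mxE eqxx /cofactor; congr (_ * (_ * \det _)).
  by apply/matrixP => i j; rewrite !mxE eq_sym (negPf (neq_lift a i)).
rewrite /determinant; apply: eq_bigr => s _; congr (_ * _).
by apply: eq_bigr => i _; rewrite mxE.
Qed.

End Derivation.

Lemma mderivXU (R : comNzRingType) N (i j : 'I_N) :
  mderiv i ('X_j : {mpoly R[N]}) = (i == j)%:R.
Proof.
rewrite mderivX mnm1E eq_sym; case: eqP => [->|_]; last by rewrite scale0r.
have -> : (U_(j) - U_(j))%MM = 0%MM :> 'X_{1..N}.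
  by apply/mnmP=> k; rewrite !mnmE subnn.
by rewrite scale1r mpolyX0.
Qed.

Lemma sum_delta_mul (R : pzSemiRingType) N (j : 'I_N) (F : 'I_N -> R) :
  \sum_a (j == a)%:R * F a = F j.
Proof.
rewrite (bigD1 j) //= eqxx mul1r big1 ?addr0 // => a /negPf.
by rewrite eq_sym => ->; rewrite mul0r.
Qed.

Section Quadric.
Variables (R : comNzRingType) (m : nat).
Implicit Types (M : 'M[R]_m.+1) (y : 'rV[R]_m.+1).

Lemma ev_qform M y : ev (qform M) y = (y *m M *m y^T) 0 0.
Proof.
rewrite /ev /qform !mxE raddf_sum.
under eq_bigr do rewrite raddf_sum.
rewrite exchange_big /=; apply: eq_bigr => b _.
rewrite !mxE big_distrl /=; apply: eq_bigr => a _.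
by rewrite /= mevalZ mevalM !mevalXU mulrA (mulrC (M a b)).
Qed.

Lemma ev_mderiv_qform M y j :
  ev (mderiv j (qform M)) y = (y *m M) 0 j + (y *m M^T) 0 j.
Proof.
have delta_sum (F : 'I_m.+1 -> 'I_m.+1 -> R) :
    \sum_a \sum_b (j == a)%:R * F a b = \sum_b F j b.
  by under eq_bigr do rewrite -big_distrr; rewrite sum_delta_mul.
rewrite /ev /qform (raddf_sum (mderiv j)) raddf_sum.
under eq_bigr do rewrite (raddf_sum (mderiv j)) raddf_sum.
transitivity (\sum_a \sum_b ((j == a)%:R * (M a b * y 0 b) +
                               (j == b)%:R * (M a b * y 0 a))).
  apply: eq_bigr => a _; apply: eq_bigr => b _.
  rewrite /= mderivZ mderivM !mderivXU mevalZ mevalD !mevalM !mevalXU !rmorph_nat.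
  by rewrite mulrDr [y 0 a * _]mulrC !(mulrCA (M a b)).
under eq_bigr do rewrite big_split /=.
rewrite big_split /= (delta_sum (fun a b => M a b * y 0 b)).
rewrite exchange_big /= (delta_sum (fun b a => M a b * y 0 a)) addrC !mxE.
by congr (_ + _); apply: eq_bigr => b _; rewrite ?mxE mulrC.
Qed.

End Quadric.

Lemma singular_qformP (R : idomainType) m (M : 'M[R]_m.+1) :
  2%:R != 0 :> R -> M^T = M -> forall y : 'rV[R]_m.+1,
  singular_at (qform M) y <-> y != 0 /\ y *m M = 0.
Proof.
move=> two_neq0 M_sym y; split=> [[y0 [_ dq]]|[y0 yM]].
  split=> //; apply/rowP => j; rewrite [RHS]mxE; move: (dq j).
  rewrite ev_mderiv_qform M_sym -mulr2n -mulr_natl => /eqP.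
  by rewrite mulf_eq0 (negPf two_neq0) => /eqP.
split=> //; split; first by rewrite ev_qform yM mul0mx mxE.
by move=> j; rewrite ev_mderiv_qform M_sym yM mxE addr0.
Qed.

Section Pencil.
Variables (R : comNzRingType) (n m : nat) (B : 'I_n.+1 -> 'M[R]_m.+1).

Lemma meval_pencil (x : 'rV[R]_n.+1) :
  map_mx (meval (fun i => x 0 i)) (pencil B) = pencil_at B x.
Proof.
apply/matrixP => a b; rewrite !mxE summxE raddf_sum; apply: eq_bigr => i _.
by rewrite /= mevalM mevalXU mevalC mxE.
Qed.

Lemma ev_detA (x : 'rV[R]_n.+1) : ev (detA B) x = \det (pencil_at B x).
Proof. by rewrite /ev /detA -meval_pencil det_map_mx. Qed.

Lemma mderiv_pencil j a c : mderiv j (pencil B a c) = (B j a c)%:MP.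
Proof.
rewrite /pencil mxE raddf_sum -[RHS](sum_delta_mul j (fun i => (B i a c)%:MP)).
by apply: eq_bigr => i _; rewrite /= mderivM mderivXU mderivC mulr0 addr0.
Qed.

Lemma ev_mderiv_detA (x : 'rV[R]_n.+1) j :
  ev (mderiv j (detA B)) x = \tr (B j *m \adj (pencil_at B x)).
Proof.
rewrite /ev /detA (derivation_det (mderivM j)) raddf_sum; apply: eq_bigr => a _.
rewrite mxE raddf_sum; apply: eq_bigr => c _.
by rewrite /= mderiv_pencil /= mevalM mevalC -meval_pencil -map_mx_adj !mxE.
Qed.

Lemma pencil_at_sym (x : 'rV[R]_n.+1) :
  (forall i, (B i)^T = B i) -> (pencil_at B x)^T = pencil_at B x.
Proof.
move=> B_sym; rewrite /pencil_at raddf_sum; apply: eq_bigr => i _.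
by rewrite /= linearZ /= B_sym.
Qed.

Lemma ev_qform_pencil_at (x : 'rV[R]_n.+1) y :
  ev (qform (pencil_at B x)) y = (x *m (\row_i psi B y i)^T) 0 0.
Proof.
rewrite ev_qform /pencil_at mulmx_sumr mulmx_suml summxE mxE; apply: eq_bigr => i _.
by rewrite -scalemxAr -scalemxAl [LHS]mxE 2![in RHS]mxE.
Qed.

End Pencil.

Lemma map_detA (k K : fieldType) (iota : {rmorphism k -> K}) n m
    (A : 'I_n.+1 -> 'M[k]_m.+1) :
  map_mpoly iota (detA A) = detA (mapA iota A).
Proof.
rewrite /detA -det_map_mx; congr (\det _); apply/matrixP => a b.
rewrite !mxE rmorph_sum; apply: eq_bigr => i _.
by rewrite rmorphM /= map_mpolyC map_mpolyX mxE.
Qed.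

Section LinearAlgebra.
Variable F : fieldType.

Lemma mxrank_minor n (M : 'M[F]_n) i j : (\rank (row' i (col' j M)) <= \rank M)%N.
Proof.
apply: leq_trans (mxrankS (rowsub_sub _ _)) _.
by rewrite -mxrank_tr tr_col' -[leqRHS]mxrank_tr mxrankS // rowsub_sub.
Qed.

Lemma adj_eq0 m (M : 'M[F]_m.+1) : (\rank M < m)%N -> \adj M = 0.
Proof.
move=> rkM; apply/matrixP => i j; rewrite !mxE /cofactor.
suff -> : \det (row' j (col' i M)) = 0 by rewrite mulr0.
apply/eqP; apply: contraTT rkM; rewrite -unitfE -unitmxE -row_free_unit.
by rewrite -leqNgt => /eqP rkN; rewrite (leq_trans _ (mxrank_minor M j i)) ?rkN.
Qed.

Lemma mxrank_det0_adj_neq0 m (M : 'M[F]_m.+1) :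
  \det M = 0 -> \adj M != 0 -> \rank M = m.
Proof.
move=> detM adjM; apply/eqP; rewrite eqn_leq; apply/andP; split.
  have : ~~ row_free M by rewrite row_free_unit unitmxE unitfE detM eqxx.
  by rewrite /row_free -ltnS ltn_neqAle rank_leq_row andbT.
by rewrite leqNgt; apply: contra adjM => /adj_eq0 ->.
Qed.

Lemma kermx_corank1 m (M : 'M[F]_m.+1) (y : 'rV[F]_m.+1) :
  \rank M = m -> y != 0 -> y *m M = 0 -> (y :=: kermx M)%MS.
Proof.
move=> rkM y0 yM; have yK : (y <= kermx M)%MS by apply/sub_kermxP.
apply/eqmxP; rewrite -(mxrank_leqif_eq yK) rank_rV y0 mxrank_ker rkM.
by rewrite subSnn.
Qed.

Lemma cV_mul_rV_sym N (u : 'cV[F]_N) (y : 'rV[F]_N) :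
  y != 0 -> (u *m y)^T = u *m y -> exists c, u = c *: y^T.
Proof.
move=> /rV0Pn[k yk] uy_sym; exists (u k 0 / y 0 k); apply/matrixP => a b.
have := congr1 (fun P : 'M_N => P k a) uy_sym.
rewrite ord1 !mxE !big_ord1 => e.
by apply: (mulIf yk); rewrite mulrAC divfK // e.
Qed.

Lemma adj_corank1_sym m (M : 'M[F]_m.+1) (y : 'rV[F]_m.+1) :
  M^T = M -> \rank M = m -> y != 0 -> y *m M = 0 ->
  exists c, \adj M = c *: (y^T *m y).
Proof.
move=> M_sym rkM y0 yM.
have detM : \det M = 0 by apply/eqP/det0P; exists y.
have : (\adj M <= y)%MS.
  by rewrite (kermx_corank1 rkM y0 yM); apply/sub_kermxP; rewrite mul_adj_mx detM raddf0.
case/submxP => u adjE.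
have [c uE] : exists c, u = c *: y^T.
  by apply: cV_mul_rV_sym y0 _; rewrite -adjE trmx_adj M_sym.
by exists c; rewrite adjE uE scalemxAl.
Qed.

Lemma mxtrace_mul_outer N (P : 'M[F]_N) (y : 'rV[F]_N) :
  \tr (P *m (y^T *m y)) = (y *m P *m y^T) 0 0.
Proof. by rewrite mulmxA mxtrace_mulC trace_mx11 mulmxA. Qed.

Lemma rV_proportional_of_hyperplane N (h p : 'rV[F]_N) : h != 0 ->
  (forall x : 'rV[F]_N, x != 0 -> (x *m h^T) 0 0 = 0 -> (x *m p^T) 0 0 = 0) ->
  exists c, p = c *: h.
Proof.
move=> /rV0Pn[k hk] p_hyp; exists (p 0 k / h 0 k); apply/rowP => i; rewrite mxE.
have [->|ik] := eqVneq i k; first by rewrite divfK.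
pose x : 'rV[F]_N := h 0 k *: delta_mx 0 i - h 0 i *: delta_mx 0 k.
have xE (v : 'rV[F]_N) : (x *m v^T) 0 0 = h 0 k * v 0 i - h 0 i * v 0 k.
  by rewrite mulmxBl -!scalemxAl -!rowE !mxE.
have x0 : x != 0.
  by apply/rV0Pn; exists i; rewrite !mxE !eqxx (negPf ik) /= mulr1 mulr0 subr0.
have xh : (x *m h^T) 0 0 = 0 by rewrite xE mulrC subrr.
move/eqP: (p_hyp x x0 xh); rewrite xE subr_eq0 => /eqP e.
by apply: (mulfI hk); rewrite e; field.
Qed.

End LinearAlgebra.

Theorem proposition2p0p2 (k : fieldType) (K : closedFieldType)
  (iota : {rmorphism k -> K}) (n m : nat) (A : 'I_n.+1 -> 'M[k]_m.+1) :
  (2 \notin [pchar k])%N -> (3 \notin [pchar k])%N ->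
  (* K is an algebraic closure of k *)
  (forall a : K, exists2 p : {poly k}, p != 0 & root (map_poly iota p) a) ->
  (forall i, (A i)^T = A i) ->
  mreduced (detA A) -> mirreducible (detA A) ->
  (* theta_X(x) = psi(phi(x)) at smooth points *)
  (forall x : 'rV[K]_n.+1, smooth_pt (map_mpoly iota (detA A)) x ->
     \rank (pencil_at (mapA iota A) x) = m /\
     forall y : 'rV[K]_m.+1, y != 0 -> y *m pencil_at (mapA iota A) x = 0 ->
       exists2 c : K, c != 0 &
         forall i, ev (mderiv i (map_mpoly iota (detA A))) x = c * psi (mapA iota A) y i)
  /\
  (* Z(psi^(x)) singular iff x in X *)
  (forall x : 'rV[K]_n.+1, x != 0 ->
     hyp_singular (qform (pencil_at (mapA iota A) x)) <->
     ev (map_mpoly iota (detA A)) x = 0)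
  /\
  (* Z(psi^(x)) singular at phi(x) whenever phi(x) is defined *)
  (forall x : 'rV[K]_n.+1, x != 0 -> ev (map_mpoly iota (detA A)) x = 0 ->
     \rank (pencil_at (mapA iota A) x) = m ->
     forall y : 'rV[K]_m.+1, y != 0 -> y *m pencil_at (mapA iota A) x = 0 ->
       singular_at (qform (pencil_at (mapA iota A) x)) y)
  /\
  (* fibre of psi over [H] = base locus of psi^ restricted to H *)
  (forall h : 'rV[K]_n.+1, h != 0 ->
     forall y : 'rV[K]_m.+1, y != 0 ->
       (exists c : K, forall i, psi (mapA iota A) y i = c * h 0 i) <->
       (forall x : 'rV[K]_n.+1, x != 0 -> (x *m h^T) 0 0 = 0 ->
          ev (qform (pencil_at (mapA iota A) x)) y = 0)).
Proof.
move=> ch2 _ _ A_sym _ _; rewrite map_detA; set B := mapA iota A.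
have B_sym i : (B i)^T = B i by rewrite /B /mapA map_trmx A_sym.
have M_sym x : (pencil_at B x)^T = pencil_at B x := pencil_at_sym x B_sym.
have two_neq0 : 2%:R != 0 :> K by move: ch2; rewrite -(fmorph_pchar iota) inE /=.
split; [|split; [|split]].
- move=> x [_ [detx [j dj]]]; rewrite ev_detA in detx.
  have adj_neq0 : \adj (pencil_at B x) != 0.
    by apply: contraNneq dj => adj0; rewrite ev_mderiv_detA adj0 mulmx0 mxtrace0.
  have rkM := mxrank_det0_adj_neq0 detx adj_neq0.
  split=> // y y0 yM.
  have [c adjE] := adj_corank1_sym (M_sym x) rkM y0 yM.
  have grad i : ev (mderiv i (detA B)) x = c * psi B y i.
    by rewrite ev_mderiv_detA adjE -scalemxAr mxtraceZ mxtrace_mul_outer.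
  exists c; last exact: grad.
  by apply: contraNneq dj => c0; rewrite grad c0 mul0r.
- move=> x _; rewrite ev_detA; split.
    by case=> y /(singular_qformP two_neq0 (M_sym x))[y0 yM]; apply/eqP/det0P; exists y.
  by move/eqP/det0P => [y y0 yM]; exists y; apply/singular_qformP.
- by move=> x _ _ _ y y0 yM; apply/singular_qformP.
move=> h h0 y _; split.
  case=> c psiE x _ xh; rewrite ev_qform_pencil_at.
  have -> : \row_i psi B y i = c *: h by apply/rowP => i; rewrite !mxE psiE.
  by rewrite linearZ /= -scalemxAr mxE xh mulr0.
move=> base; have [c psiE] : exists c, \row_i psi B y i = c *: h.
  by apply: rV_proportional_of_hyperplane h0 _ => x x0 xh; rewrite -ev_qform_pencil_at base.
by exists c => i; move/rowP/(_ i): psiE; rewrite !mxE.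
Qed.
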